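(* Let $a\geq 3$ be an integer. For $m\geq 1$, the number $A_m$ of right $0$-pyramids of pieces of length $a$ and of size $m$ is $$A_m=\frac{1}{(a-1)m+1}\binom{am}{m}=\frac{(am)!}{m!\,((a-1)m+1)!}.$$
   Context: A piece is an open interval $]s,s+a[$ with $s\in\mathbb Z$; two pieces are concurrent iff their intervals intersect. A heap is a finite configuration obtained by successively dropping pieces vertically towards the horizontal axis, each coming to rest on the axis or on top of the highest previously placed piece whose interval meets its own; configurations (not dropping orders) are counted. A pyramid is a heap with a unique bottom piece (exactly one piece on the axis); its size is its number of pieces. A right $0$-pyramid is a pyramid whose bottom piece covers $]0,a[$ and is a leftmost piece (no piece covers $]t,t+a[$ with $t<0$). *)

From HB Require Import structures.
From mathcomp Require Import all_boot all_order all_algebra.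
From mathcomp Require Import finmap.
Set Implicit Arguments. Unset Strict Implicit. Unset Printing Implicit Defensive.
Import Order.TTheory GRing.Theory Num.Theory.
Local Open Scope fset_scope.

(* A placed piece is a pair (s, h): the open interval ]s, s+a[ (s : int)
   resting at level h (h = 0 means lying on the horizontal axis). *)
Definition placed := (int * nat)%type.

(* Pieces ]s,s+a[ and ]t,t+a[ are concurrent iff the intervals meet,
   i.e. |s - t| < a. *)
Definition concurrent (a : nat) (s t : int) : bool := (`|s - t| < a)%N.

Definition drop_level (a : nat) (C : {fset placed}) (s : int) : nat :=
  \max_(p <- C | concurrent a p.1 s) p.2.+1.

Inductive heap (a : nat) : {fset placed} -> Prop :=
  | heap_empty : heap a fset0
  | heap_drop C s : heap a C -> heap a ((s, drop_level a C s) |` C).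

Definition pyramid (a : nat) (C : {fset placed}) : Prop :=
  heap a C /\ #|` [fset p in C | p.2 == 0%N]| = 1%N.

Definition right0_pyramid (a : nat) (C : {fset placed}) : Prop :=
  pyramid a C /\ ((0%Z, 0%N) \in C) /\ (forall p, p \in C -> (0 <= p.1)%R).

From HB Require Import structures.
From mathcomp Require Import all_boot all_order all_algebra.
From mathcomp Require Import finmap.
From mathcomp Require Import zify ring.
Set Implicit Arguments. Unset Strict Implicit. Unset Printing Implicit Defensive.
Import Order.TTheory GRing.Theory Num.Theory.

(* A right 0-pyramid of size m is coded by the abscissae x_1 = 0, x_2, ..., x_m
   of its pieces, dropped so that the leftmost maximal piece comes last; the
   codes are exactly the sequences with 0 <= x_(k+1) <= x_k + a - 1. Indeed the
   next piece of such a sequence always lands on the heap, and the last letter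
   is read back as the abscissa of the leftmost maximal piece. The parts
   c_k = x_k + (a - 1) - x_(k+1), c_m = x_m + a, turn codes into the weak
   compositions of (a - 1) m + 1 into m parts whose partial sums satisfy
   c_1 + ... + c_j <= (a - 1) j. By the cycle lemma exactly one of the m
   rotations of every weak composition of (a - 1) m + 1 has this property, so
   m A_m = C(a m, (a - 1) m + 1). *)

Fixpoint weak_compositions (k n : nat) : seq (seq nat) :=
  if k is k'.+1 then [seq (n - j) :: t | j <- iota 0 n.+1, t <- weak_compositions k' j]
  else if n == 0 then [:: [::]] else [::].

Lemma weak_compositionsS k n : weak_compositions k.+1 n =
  [seq (n - j) :: t | j <- iota 0 n.+1, t <- weak_compositions k j].
Proof. by []. Qed.

Lemma mem_weak_compositions k n c :
  (c \in weak_compositions k n) = (size c == k) && (sumn c == n).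
Proof.
elim: k n c => [|k IHk] n c.
  by case: c => [|x c]; case: n => [|n]; rewrite ?inE.
rewrite weak_compositionsS; apply/allpairsPdep/idP => [[j [t [jn ht ->]]] /= | ].
  rewrite IHk in ht; case/andP: ht => /eqP-> /eqP->.
  rewrite mem_iota in jn; rewrite /= eqxx; apply/eqP; lia.
case: c => [//|x c] /andP[/eqP [sc] /eqP /= sxc].
exists (sumn c), c; split; last by congr (_ :: _); lia.
- suff : sumn c \in iota 0 n.+1 by []; rewrite mem_iota; lia.
- by rewrite IHk sc !eqxx.
Qed.

Lemma allpairs_cons_uniq (T U : eqType) (s : seq T) (t : T -> seq (seq U)) (g : T -> U) :
  uniq s -> {in s &, injective g} -> (forall x, uniq (t x)) ->
  uniq [seq g x :: y | x <- s, y <- t x].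
Proof.
elim: s => [|x s IHs] //= /andP[xs us] ginj tu.
rewrite cat_uniq map_inj_uniq ?tu; last by move=> ? ? [].
rewrite IHs //; last by move=> u v us' vs'; apply: ginj; rewrite inE ?us' ?vs' orbT.
rewrite andbT; apply/hasPn => z /allpairsPdep [x' [y' [x's _ ->]]].
apply/mapP => [[y _ [gx _]]].
have ex : x' = x by apply: ginj; rewrite ?inE ?x's ?eqxx ?orbT.
by move: xs; rewrite -ex x's.
Qed.

Lemma weak_compositions_uniq k n : uniq (weak_compositions k n).
Proof.
elim: k n => [|k IHk] n; first by case: n.
apply: allpairs_cons_uniq => //; first exact: iota_uniq.
by move=> u v; rewrite !mem_iota => ? ? ?; lia.
Qed.

Lemma hockey_stick k n :
  sumn [seq 'C(j + k - 1, j) | j <- iota 0 n.+1] = 'C(n + k, n).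
Proof.
elim: n => [|n IHn]; first by rewrite /= !bin0.
rewrite -[n.+2]addn1 iotaD map_cat sumn_cat IHn /= add0n addn0.
have -> : n.+1 + k - 1 = n + k by lia.
by rewrite addSn binS addnC.
Qed.

Lemma size_weak_compositions k n :
  size (weak_compositions k n) = 'C(n + k - 1, n).
Proof.
elim: k n => [|k IHk] n.
  by case: n => [|n] //=; rewrite addn0 subn1 bin_small.
rewrite weak_compositionsS size_allpairs_dep (eq_map IHk) hockey_stick; congr 'C(_, _); lia.
Qed.

Definition ballot (b : nat) (c : seq nat) : bool :=
  all (fun j => sumn (take j c) <= b * j) (iota 0 (size c)).

Lemma sumn_take_le c j : sumn (take j c) <= sumn c.
Proof. by rewrite -{2}(cat_take_drop j c) sumn_cat leq_addr. Qed.

Lemma sumn_drop c j : sumn (drop j c) = sumn c - sumn (take j c).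
Proof. by rewrite -{2}(cat_take_drop j c) sumn_cat addKn. Qed.

Lemma exists_first_argmin (F : nat -> nat) n : 0 < n ->
  exists i, [/\ i < n, forall k, k < n -> F i <= F k & forall k, k < i -> F i < F k].
Proof.
case: n => // n _; elim: n => [|n [i [ni Fmin Ffirst]]].
  by exists 0; split => // k; rewrite ltnS leqn0 => /eqP->.
have [Fn|Fi] := ltnP (F n.+1) (F i).
  exists n.+1; split=> // k kn; last by have := Fmin _ kn; lia.
  by case: (ltnP k n.+1) => [/Fmin | ?]; [lia | have -> : k = n.+1 by lia].
exists i; split=> // [|k kn]; first lia.
by case: (ltnP k n.+1) => [/Fmin // | ?]; have -> : k = n.+1 by lia.
Qed.

Lemma count_uniq_eq1 (T : eqType) (P : pred T) (s : seq T) x :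
  uniq s -> x \in s -> P x -> {in s, forall y, P y -> y = x} -> count P s = 1.
Proof.
move=> us xs Px Pxonly.
rewrite (@eq_in_count _ _ (pred1 x)) ?count_uniq_mem ?xs //.
by move=> y ys /=; apply/idP/eqP => [/Pxonly->//|->].
Qed.

Section CycleLemma.
Variable b : nat.

Lemma ballot_rot_exists c : sumn c = b * size c + 1 -> 0 < size c ->
  exists2 i, i < size c & ballot b (rot i c).
Proof.
move=> sumc c0; set n := size c in sumc c0 *.
have psum_le j : sumn (take j c) <= sumn c by exact: sumn_take_le.
(* rotate at the first index where [b * j - sumn (take j c)] is minimal *)
have [i [ni imin ifirst]] :=
  exists_first_argmin (fun j => b * j + sumn c - sumn (take j c)) c0.
exists i => //; apply/allP => k; rewrite size_rot mem_iota add0n => kn.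
rewrite /rot take_cat size_drop.
case: ifP => kni.
  have ikn : i + k < n by lia.
  have := imin _ ikn; have := psum_le (i + k); have := psum_le i.
  rewrite takeD sumn_cat mulnDr; lia.
rewrite sumn_cat take_takel ?sumn_drop; last lia.
set j := k - (n - i).
have ji : j < i by rewrite /j; lia.
have := ifirst _ ji; have := psum_le j; have := psum_le i.
have : b * k = b * (n - i) + b * j by rewrite -mulnDr /j; congr (_ * _); lia.
have : b * n = b * (n - i) + b * i by rewrite -mulnDr; congr (_ * _); lia.
lia.
Qed.

Lemma ballot_rot_nonballot c k : sumn c = b * size c + 1 ->
  ballot b c -> 0 < k < size c -> ~~ ballot b (rot k c).
Proof.
move=> sumc /allP cb /andP[k0 kn]; apply/negP => /allP rcb.
have := rcb (size c - k); rewrite size_rot mem_iota add0n.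
rewrite /rot take_cat size_drop ltnn subnn take0 cats0 sumn_drop.
have := cb k; rewrite mem_iota add0n kn => /(_ isT).
have := sumn_take_le c k; rewrite mulnBr; nia.
Qed.

Lemma ballot_rot_unique c i j : sumn c = b * size c + 1 -> i < size c -> j < size c ->
  ballot b (rot i c) -> ballot b (rot j c) -> i = j.
Proof.
move=> sumc; wlog ij : i j / i <= j.
  by move=> H ic jc bi bj; case: (leqP i j) => [|/ltnW] ij; [|apply/esym]; apply: H.
move=> ic jc bi bj; have [lt_ij|?|->//] := ltngtP i j; last lia; exfalso.
have rji : rot (j - i) (rot i c) = rot j c by rewrite -rotD ?subnK //; lia.
have sumci : sumn (rot i c) = b * size (rot i c) + 1 by rewrite size_rot sumn_rot.
have ji : 0 < j - i < size (rot i c) by rewrite size_rot; lia.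
by case/negP: (ballot_rot_nonballot sumci bi ji); rewrite rji.
Qed.

Variable m : nat.
Hypothesis m_gt0 : 0 < m.
Let X := weak_compositions m (b * m + 1).

Lemma count_ballot_rot c : c \in X -> count (fun i => ballot b (rot i c)) (iota 0 m) = 1.
Proof.
rewrite mem_weak_compositions => /andP[/eqP sc /eqP sumc].
have c0 : 0 < size c by rewrite sc.
rewrite -sc in sumc *.
have [i ic bi] := ballot_rot_exists sumc c0.
apply: (count_uniq_eq1 (x := i)); rewrite ?iota_uniq ?mem_iota //.
by move=> j; rewrite mem_iota add0n => jc bj; apply: (ballot_rot_unique sumc).
Qed.

Lemma perm_map_rot_weak_compositions i : perm_eq (map (rot i) X) X.
Proof.
apply: uniq_perm; rewrite ?map_inj_uniq ?weak_compositions_uniq //; first exact: rot_inj.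
move=> c; apply/mapP/idP => [[d + ->]|cX].
  by rewrite !mem_weak_compositions size_rot sumn_rot.
exists (rotr i c); last by rewrite rotrK.
by move: cX; rewrite !mem_weak_compositions size_rotr /rotr sumn_rot.
Qed.

Lemma cycle_lemma : m * count (ballot b) X = size X.
Proof.
rewrite -sum1_size.
transitivity (\sum_(c <- X) \sum_(i <- iota 0 m) if ballot b (rot i c) then 1 else 0).
  rewrite exchange_big /= (eq_bigr (fun _ => count (ballot b) X)).
    by rewrite big_const_seq count_predT size_iota iter_addn_0 mulnC.
  move=> i _; rewrite -big_mkcond sum1_count.
  by rewrite -(permP (perm_map_rot_weak_compositions i) (ballot b)) count_map.
by apply: eq_big_seq => c cX; rewrite -big_mkcond sum1_count count_ballot_rot.
Qed.

End CycleLemma.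

Lemma exists_argmin_seq (T : eqType) (s : seq T) (P : pred T) (f : T -> nat) :
  has P s -> exists2 x, x \in s & P x && all (fun y => P y ==> (f x <= f y)) s.
Proof.
elim: s => [//|y s IHs] /=.
have [/IHs [x xs /andP[Px xmin]] _ | sP] := boolP (has P s); last first.
  rewrite orbF => Py; exists y; rewrite ?mem_head // Py /= leqnn /=.
  by apply/allP => z zs; apply/implyP => Pz; case/hasP: sP; exists z.
have [/andP[Py fyx] | yx] := boolP (P y && (f y < f x)).
  exists y; rewrite ?mem_head // Py /= leqnn /=.
  apply/allP => z zs; apply/implyP => Pz.
  by have := implyP (allP xmin z zs) Pz; apply: leq_trans (ltnW fyx).
exists x; first by rewrite inE xs orbT.
by rewrite Px /= xmin andbT; apply/implyP => Py; move: yx; rewrite Py -leqNgt.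
Qed.

Lemma exists_argmax_seq (T : eqType) (s : seq T) (f : T -> nat) :
  s != [::] -> exists2 x, x \in s & all (fun y => f y <= f x) s.
Proof.
elim: s => [//|y s IHs] _ /=.
have [->|/IHs [x xs xmax]] := eqVneq s [::]; first by exists y; rewrite ?mem_head //= leqnn.
have [fyx|fxy] := leqP (f y) (f x); first by exists x; rewrite ?inE ?xs ?orbT // fyx.
exists y; rewrite ?mem_head //= leqnn /=.
by apply/allP => z zs; apply: leq_trans (allP xmax z zs) (ltnW fxy).
Qed.

Section Heaps.
Variable a : nat.
Local Open Scope fset_scope.

Lemma concurrentE s t : concurrent a s t = (t - a%:Z < s < t + a%:Z)%R.
Proof.
rewrite /concurrent -ltz_nat abszE ltr_norml.
by apply/idP/idP => /andP[? ?]; apply/andP; split; lia.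
Qed.

Lemma concurrentC s t : concurrent a s t = concurrent a t s.
Proof. by rewrite /concurrent distnC. Qed.

Lemma drop_level_gt C s p : p \in C -> concurrent a p.1 s -> p.2 < drop_level a C s.
Proof. by move=> pC ps; apply: (leq_bigmax_seq (F := fun p : placed => p.2.+1)). Qed.

Lemma drop_level_le C s h :
  (forall p : placed, p \in C -> concurrent a p.1 s -> p.2 < h) -> drop_level a C s <= h.
Proof. by move=> Ch; apply/bigmax_leqP_seq => p pC ps; apply: Ch. Qed.

Lemma drop_level_support C s : 0 < drop_level a C s ->
  exists2 p : placed, p \in C & concurrent a p.1 s && (p.2.+1 == drop_level a C s).
Proof.
move=> dl_gt0; apply/hasP/negPn/negP => /hasPn noC.
suff : drop_level a C s <= (drop_level a C s).-1 by lia.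
apply: drop_level_le => p pC ps.
by have := drop_level_gt pC ps; have := noC p pC; rewrite ps /=; lia.
Qed.

Lemma drop_level0 s : drop_level a fset0 s = 0.
Proof. by rewrite /drop_level big_nil. Qed.

Definition drop_piece (C : {fset placed}) (s : int) : {fset placed} :=
  (s, drop_level a C s) |` C.

Definition heap_of (w : seq int) : {fset placed} := foldl drop_piece fset0 w.

Lemma heap_of_rcons w x : heap_of (rcons w x) = drop_piece (heap_of w) x.
Proof. by rewrite /heap_of foldl_rcons. Qed.

Lemma heap_heap_of w : heap a (heap_of w).
Proof.
elim/last_ind: w => [|w x IHw]; first exact: heap_empty.
by rewrite heap_of_rcons; apply: heap_drop.
Qed.

Lemma heap_of_base : heap_of [:: 0%R] = [fset (0%Z, 0%N)].
Proof. by rewrite /heap_of /= /drop_piece drop_level0 fsetU0. Qed.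

Record well_stacked (C : {fset placed}) : Prop := WellStacked {
  level_disjoint : forall p q : placed, p \in C -> q \in C -> p.2 = q.2 ->
    concurrent a p.1 q.1 -> p = q;
  level_supported : forall p : placed, p \in C -> 0 < p.2 ->
    exists2 q : placed, q \in C & (q.2.+1 == p.2) && concurrent a q.1 p.1 }.

Lemma heap_well_stacked C : heap a C -> well_stacked C.
Proof.
elim=> [|{}C s _ [disj supp]]; first by split=> [p q|p]; rewrite inE.
split.
  move=> p q; rewrite !in_fset1U => /predU1P[->|pC] /predU1P[->|qC] //= pq.
  - by rewrite concurrentC => /(drop_level_gt qC); rewrite -pq ltnn.
  - by move/(drop_level_gt pC); rewrite pq ltnn.
  - exact: disj.
move=> p; rewrite in_fset1U => /predU1P[->|pC] /= p_gt0.
  have [q qC /andP[qs /eqP qdl]] := drop_level_support p_gt0.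
  by exists q; rewrite ?in_fset1U ?qC ?orbT // qdl eqxx.
have [q qC qp] := supp p pC p_gt0.
by exists q; rewrite // in_fset1U qC orbT.
Qed.

Definition maximal (C : {fset placed}) (p : placed) : bool :=
  all (fun q : placed => concurrent a q.1 p.1 ==> (q.2 <= p.2)) C.

Lemma maximalP C p :
  reflect (forall q : placed, q \in C -> concurrent a q.1 p.1 -> q.2 <= p.2) (maximal C p).
Proof.
apply: (iffP allP) => Cp q qC; first by move=> qp; have := Cp q qC; rewrite qp.
by apply/implyP; apply: Cp.
Qed.

Lemma dropped_maximal C s : maximal (drop_piece C s) (s, drop_level a C s).
Proof.
apply/maximalP => q; rewrite in_fset1U => /predU1P[->//|qC] /= qs.
exact: ltnW (drop_level_gt qC qs).
Qed.

Lemma maximal_subset C C' p : C' `<=` C -> maximal C p -> maximal C' p.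
Proof. by move=> /fsubsetP C'C /maximalP Cp; apply/maximalP => q /C'C; apply: Cp. Qed.

Definition leftmost_maximal (C : {fset placed}) (p : placed) : Prop :=
  [/\ p \in C, maximal C p & forall q : placed, q \in C -> maximal C q -> (p.1 <= q.1)%R].

Definition pyramid_code (s : seq int) : bool :=
  if s is x :: t then
    [&& x == 0%R, all (fun y => 0 <= y)%R t & path (fun u v => v <= u + a%:Z - 1)%R x t]
  else false.

Lemma pyramid_code_rcons s x : s != [::] ->
  pyramid_code (rcons s x) =
    [&& pyramid_code s, (0 <= x)%R & (x <= last 0%R s + a%:Z - 1)%R].
Proof.
case: s => // y t _ /=; rewrite all_rcons rcons_path.
by case: (y == 0%R); case: (0 <= x)%R; case: (all _ t); case: (path _ y t);
  case: (x <= _)%R.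
Qed.

Lemma pyramid_code_neq0 s : pyramid_code s -> s != [::].
Proof. by case: s. Qed.

Definition right0_stacked (C : {fset placed}) : Prop :=
  [/\ well_stacked C, forall p : placed, p \in C -> (0 <= p.1)%R,
      (0%Z, 0%N) \in C & forall p : placed, p \in C -> p.2 = 0 -> p = (0%Z, 0%N)].

Lemma right0_pyramid_stacked C : right0_pyramid a C -> right0_stacked C.
Proof.
move=> [[Cheap card_level0] [baseC C_ge0]].
split=> //; first exact: heap_well_stacked.
move=> p pC p0.
have /cardfs1P [x Cx] : #|` [fset p in C | p.2 == 0]| == 1 by rewrite card_level0.
have : (0%Z, 0%N) \in [fset p in C | p.2 == 0] by rewrite !inE baseC.
have : p \in [fset p in C | p.2 == 0] by rewrite !inE pC p0.
by rewrite Cx !inE => /eqP-> /eqP->.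
Qed.

Lemma well_stacked_level1 C k (p : placed) : well_stacked C -> p \in C -> p.2 = k.+1 ->
  exists2 r : placed, r \in C & r.2 = 1.
Proof.
move=> stC; elim: k p => [|k IHk] p pC pk; first by exists p.
have p_gt0 : 0 < p.2 by rewrite pk.
have [q qC /andP[/eqP qp _]] := level_supported stC pC p_gt0.
by apply: (IHk q) => //; rewrite pk in qp; case: qp.
Qed.

Lemma drop_level_fsetD1 C p : well_stacked C -> p \in C -> maximal C p ->
  drop_level a (C `\ p) p.1 = p.2.
Proof.
move=> stC pC pmax; apply/anti_leq/andP; split.
  apply: drop_level_le => y /fsetD1P[yp yC] yconc.
  rewrite ltn_neqAle (maximalP _ _ pmax y yC yconc) andbT.
  by apply: contra yp => /eqP yp2; apply/eqP/(level_disjoint stC).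
have [p0|p_gt0] := posnP p.2; first by rewrite p0.
have [q qC /andP[/eqP qp qconc]] := level_supported stC pC p_gt0.
rewrite -qp; apply: drop_level_gt qconc; apply/fsetD1P; split=> //.
by apply/eqP => qp'; move: qp; rewrite qp'; lia.
Qed.

Lemma drop_piece_fsetD1 C p : well_stacked C -> p \in C -> maximal C p ->
  drop_piece (C `\ p) p.1 = C.
Proof.
move=> stC pC pmax; rewrite /drop_piece drop_level_fsetD1 //.
by case: p pC pmax => s h pC _; apply: fsetD1K.
Qed.

Lemma right0_stacked_fsetD1 C p : right0_stacked C -> p \in C -> maximal C p ->
  p != (0%Z, 0%N) -> right0_stacked (C `\ p).
Proof.
move=> [stC C_ge0 baseC level0] pC pmax pbase.
split; last 3 first.
- by move=> y /fsetD1P[_ /C_ge0].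
- by apply/fsetD1P; split; rewrite // eq_sym.
- by move=> y /fsetD1P[_ /level0].
split=> [y y' /fsetD1P[_ yC] /fsetD1P[_ y'C] | y /fsetD1P[yp yC] y_gt0].
  exact: level_disjoint stC _ _ yC y'C.
have [w wC /andP[/eqP wy wy']] := level_supported stC yC y_gt0.
exists w; rewrite ?wy ?eqxx ?wy' //; apply/fsetD1P; split=> //.
apply/eqP => wp; rewrite wp concurrentC in wy'; rewrite wp in wy.
by have := (maximalP _ _ pmax) y yC wy'; rewrite -wy ltnn.
Qed.

Hypothesis a_gt0 : 0 < a.

Lemma concurrentxx s : concurrent a s s.
Proof. by rewrite /concurrent subrr. Qed.

Lemma dropped_notin C s : (s, drop_level a C s) \notin C.
Proof. by apply/negP => /drop_level_gt /(_ (concurrentxx s)); rewrite ltnn. Qed.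

Lemma maximal_inj C p q : p \in C -> q \in C ->
  maximal C p -> maximal C q -> p.1 = q.1 -> p = q.
Proof.
case: p q => [s h] [t k] pC qC /maximalP /(_ _ qC) + /maximalP /(_ _ pC) /= + st.
rewrite st concurrentxx => /(_ isT) /= kh /(_ isT) hk.
by congr (_, _); apply/anti_leq; rewrite kh hk.
Qed.

(* Besides the pyramid properties, the invariant records that [0, last s] is
   covered, so that the next piece cannot land on the axis, and that the last
   letter is the abscissa of the leftmost maximal piece, so that the code can be
   read back from the heap. *)
Record code_heap_spec (s : seq int) : Prop := CodeHeapSpec {
  card_heap_of : #|` heap_of s| = size s;
  heap_of_ge0 : forall p : placed, p \in heap_of s -> (0 <= p.1)%R;
  base_in_heap_of : (0%Z, 0%N) \in heap_of s;
  heap_of_level0 : forall p : placed, p \in heap_of s -> p.2 = 0 -> p = (0%Z, 0%N);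
  heap_of_covers : forall t : int, (0 <= t)%R -> (t <= last 0%R s)%R ->
    exists2 q : placed, q \in heap_of s & (q.1 <= t < q.1 + a%:Z)%R;
  heap_of_last : exists2 z, leftmost_maximal (heap_of s) z & z.1 = last 0%R s }.

Lemma code_heap_spec_base : code_heap_spec [:: 0%R].
Proof.
split; rewrite heap_of_base /=.
- by rewrite cardfs1.
- by move=> p; rewrite inE => /eqP->.
- by rewrite inE.
- by move=> p; rewrite inE => /eqP->.
- by move=> t ? ?; exists (0%Z, 0%N); rewrite ?inE //=; lia.
- exists (0%Z, 0%N) => //; split; first by rewrite inE.
    by apply/maximalP => q; rewrite inE => /eqP->.
  by move=> q; rewrite inE => /eqP->.
Qed.

Section CodeStep.
Variables (s : seq int) (x : int).
Hypotheses (s_spec : code_heap_spec s) (x_ge0 : (0 <= x)%R)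
  (x_le : (x <= last 0%R s + a%:Z - 1)%R).

Lemma drop_level_code_gt0 : 0 < drop_level a (heap_of s) x.
Proof.
have [z [zC _ _] z1] := heap_of_last s_spec.
have [xl|lx] := lerP x (last 0%R s).
  have [q qC /andP[qx xq]] := heap_of_covers s_spec x_ge0 xl.
  have qx' : concurrent a q.1 x by rewrite concurrentE; lia.
  by have := drop_level_gt qC qx'; lia.
have zx : concurrent a z.1 x by rewrite concurrentE; lia.
by have := drop_level_gt zC zx; lia.
Qed.

Lemma code_heap_spec_rcons : code_heap_spec (rcons s x).
Proof.
have [z [zC zmax zleft] z1] := heap_of_last s_spec.
have x_notin := dropped_notin (heap_of s) x.
split; rewrite heap_of_rcons ?last_rcons ?size_rcons /drop_piece.
- by rewrite cardfsU1 x_notin card_heap_of.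
- by move=> p; rewrite in_fset1U => /predU1P[->//|]; apply: heap_of_ge0.
- by rewrite in_fset1U base_in_heap_of ?orbT.
- move=> p; rewrite in_fset1U => /predU1P[->/= dl0|]; last exact: heap_of_level0.
  by have := drop_level_code_gt0; rewrite dl0.
- move=> t t_ge0 tx.
  have [tl|lt] := lerP t (last 0%R s).
    have [q qC tq] := heap_of_covers s_spec t_ge0 tl.
    by exists q; rewrite // in_fset1U qC orbT.
  by exists z; rewrite ?in_fset1U ?zC ?orbT //; apply/andP; split; lia.
- exists (x, drop_level a (heap_of s) x) => //.
  split; [exact: fset1U1 | exact: dropped_maximal |].
  move=> y; rewrite in_fset1U => /predU1P[->//|yC] ymax.
  have yx : ~~ concurrent a y.1 x.
    apply/negP => yx; have := drop_level_gt yC yx.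
    have := (maximalP _ _ ymax) _ (fset1U1 _ _); rewrite /= concurrentC => /(_ yx).
    lia.
  have := zleft y yC (maximal_subset (fsubsetU1 _ _) ymax).
  by move: yx; rewrite /= concurrentE negb_and -!leNgt; lia.
Qed.

End CodeStep.

Lemma pyramid_code_spec s : pyramid_code s -> code_heap_spec s.
Proof.
elim/last_ind: s => [//|s x IHs].
have [->|sn] := eqVneq s [::]; first by rewrite /= andbT => /eqP->; apply: code_heap_spec_base.
rewrite pyramid_code_rcons // => /and3P[/IHs s_spec x_ge0 x_le].
exact: code_heap_spec_rcons.
Qed.

Lemma right0_pyramid_heap_of s : pyramid_code s -> right0_pyramid a (heap_of s).
Proof.
move=> /pyramid_code_spec s_spec.
split; last by split; [apply: base_in_heap_of s_spec | apply: heap_of_ge0 s_spec].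
split; first exact: heap_heap_of.
suff -> : [fset p in heap_of s | p.2 == 0] = [fset (0%Z, 0%N)] by rewrite cardfs1.
apply/fsetP => p; rewrite !inE; apply/andP/eqP => [[pC /eqP p0]|->].
  exact: heap_of_level0 s_spec _ pC p0.
by rewrite (base_in_heap_of s_spec).
Qed.

Lemma code_last_unique s s' : code_heap_spec s -> code_heap_spec s' ->
  heap_of s = heap_of s' -> last 0%R s = last 0%R s'.
Proof.
move=> /heap_of_last [z [zC zmax zleft] <-] /heap_of_last [z' [z'C z'max z'left] <-] e.
rewrite -e in z'C z'max z'left.
by apply: le_anti; rewrite zleft ?z'left.
Qed.

Lemma drop_piece_injl C C' x : drop_piece C x = drop_piece C' x -> C = C'.
Proof.
move=> e; have p'max := dropped_maximal C' x; rewrite -e in p'max.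
have pp' : (x, drop_level a C x) = (x, drop_level a C' x).
  apply: (maximal_inj (C := drop_piece C x)) => //; last exact: dropped_maximal.
    exact: fset1U1.
  by rewrite e; apply: fset1U1.
rewrite -(fsetU1K (dropped_notin C x)) -(fsetU1K (dropped_notin C' x)).
by rewrite -pp'; congr (_ `\ _); rewrite -/(drop_piece C x) e /drop_piece pp'.
Qed.

Lemma heap_of_inj s s' : pyramid_code s -> pyramid_code s' -> heap_of s = heap_of s' -> s = s'.
Proof.
elim/last_ind: s s' => [//|s x IHs] s'; case/lastP: s' => [//|s' x'] c c' e.
have xx' : x = x'.
  by have := code_last_unique (pyramid_code_spec c) (pyramid_code_spec c') e;
    rewrite !last_rcons.
subst x'; rewrite !heap_of_rcons in e; have {}e := drop_piece_injl e.
have [s0|sn] := eqVneq s [::]; have [s'0|s'n] := eqVneq s' [::].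
- by rewrite s0 s'0.
- move: c'; rewrite pyramid_code_rcons // => /andP[/pyramid_code_spec/base_in_heap_of].
  by rewrite -e s0.
- move: c; rewrite pyramid_code_rcons // => /andP[/pyramid_code_spec/base_in_heap_of].
  by rewrite e s'0.
move: c c'; rewrite !pyramid_code_rcons // => /andP[c _] /andP[c' _].
by rewrite (IHs s').
Qed.

Lemma base_not_maximal C q : right0_stacked C -> q \in C -> q != (0%Z, 0%N) ->
  ~~ maximal C (0%Z, 0%N).
Proof.
move=> [stC _ _ level0] qC qbase; apply/negP => /maximalP bmax.
have q_gt0 : 0 < q.2 by rewrite lt0n; apply: contra qbase => /eqP/(level0 _ qC)->.
have [r rC r1] := well_stacked_level1 stC qC (esym (prednK q_gt0)).
have r_gt0 : 0 < r.2 by rewrite r1.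
have [w wC /andP[/eqP wr rw]] := level_supported stC rC r_gt0.
have w0 : w.2 = 0 by rewrite r1 in wr; case: wr.
rewrite (level0 w wC w0) concurrentC in rw.
by have := bmax r rC rw; rewrite r1.
Qed.

Lemma exists_maximal C q : q \in C -> has (maximal C) C.
Proof.
move=> qC; have C_neq0 : (C : seq placed) != [::].
  by apply: contraTneq qC => C0; rewrite -[q \in C]/(q \in enum_fset C) C0.
have [r rC rtop] := exists_argmax_seq (fun p : placed => p.2) C_neq0.
by apply/hasP; exists r => //; apply/maximalP => p pC _; apply: (allP rtop).
Qed.

Lemma exists_leftmost_maximal C q : right0_stacked C -> q \in C -> q != (0%Z, 0%N) ->
  exists2 p, leftmost_maximal C p & p != (0%Z, 0%N).
Proof.
move=> rC qC qbase; have [_ C_ge0 _ _] := rC.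
have [p pC /andP[pmax pleft]] :=
  exists_argmin_seq (fun p : placed => absz p.1) (exists_maximal qC).
exists p; last by apply: contraNneq (base_not_maximal rC qC qbase) => <-.
split=> // y yC ymax; have := implyP (allP pleft y yC) ymax.
by have := C_ge0 p pC; have := C_ge0 y yC; lia.
Qed.

Lemma leftmost_maximal_bound C p s : leftmost_maximal C p -> code_heap_spec s ->
  heap_of s = C `\ p -> (p.1 <= last 0%R s + a%:Z - 1)%R.
Proof.
move=> [pC pmax pleft] s_spec e; rewrite leNgt; apply/negP => p_far.
have [z [zC zmax _] z1] := heap_of_last s_spec; rewrite e in zC zmax.
have /fsetD1P[zp zC'] := zC.
suff zmaxC : maximal C z by have := pleft z zC' zmaxC; lia.
apply/maximalP => y yC yz; have [yp|yp] := eqVneq y p.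
  by move: yz; rewrite yp concurrentE; lia.
by apply: (maximalP _ _ zmax) yz; apply/fsetD1P.
Qed.

Lemma heap_of_surj C : right0_stacked C -> exists2 s, pyramid_code s & heap_of s = C.
Proof.
move Cn : #|` C| => n; elim: n C Cn => [|n IHn] C Cn rC; have [stC C_ge0 baseC _] := rC.
  by move/eqP: Cn; rewrite cardfs_eq0 => /eqP C0; move: baseC; rewrite C0.
have [/hasP[q qC qbase] | Cbase] := boolP (has (predC1 (0%Z, 0%N)) C); last first.
  exists [:: 0%R] => //; rewrite heap_of_base; apply/fsetP => y; rewrite inE.
  apply/eqP/idP => [->//|yC]; apply/eqP/negPn.
  by apply: contra Cbase => ybase; apply/hasP; exists y.
have [p pleft pbase] := exists_leftmost_maximal rC qC qbase.
have [pC pmax _] := pleft.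
have Cn' : #|` C `\ p| = n by move: Cn; rewrite (cardfsD1 p) pC => -[].
have [s s_code e] := IHn _ Cn' (right0_stacked_fsetD1 rC pC pmax pbase).
exists (rcons s p.1); last by rewrite heap_of_rcons e drop_piece_fsetD1.
rewrite pyramid_code_rcons ?s_code ?C_ge0 //=; last exact: pyramid_code_neq0 s_code.
exact: leftmost_maximal_bound pleft (pyramid_code_spec s_code) e.
Qed.

End Heaps.

Section Codes.
Variable b : nat.
Local Notation a := b.+1.
Local Notation step := (fun u v : int => v <= u + a%:Z - 1)%R.

Fixpoint code_of_composition (x : int) (c : seq nat) : seq int :=
  if c is c0 :: c' then x :: code_of_composition (x + b%:Z - c0%:Z)%R c' else [::].

Lemma size_code_of_composition (x : int) c : size (code_of_composition x c) = size c.
Proof. by elim: c x => //= c0 c IHc x; rewrite IHc. Qed.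

Lemma code_of_compositionE (x : int) c : code_of_composition x c =
  [seq (x + (b * j)%:Z - (sumn (take j c))%:Z)%R | j <- iota 0 (size c)].
Proof.
elim: c x => [//|c0 c IHc] x /=.
rewrite muln0 addr0 subr0; congr (_ :: _).
rewrite IHc -[1]/(1 + 0) iotaDl -map_comp; apply: eq_map => j /=.
rewrite mulnDr muln1 add0n; lia.
Qed.

Lemma ballot_code_of_composition c :
  ballot b c = all (fun y => 0 <= y)%R (code_of_composition 0%R c).
Proof.
rewrite code_of_compositionE all_map; apply: eq_all => j /=.
by rewrite add0r subr_ge0 lez_nat.
Qed.

Lemma path_code_of_composition (x y : int) c : (y <= x + a%:Z - 1)%R ->
  path step x (code_of_composition y c).
Proof. by elim: c x y => //= c0 c IHc x y -> /=; apply: IHc; lia. Qed.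

Lemma pyramid_code_of_composition c : c != [::] -> ballot b c ->
  pyramid_code a (code_of_composition 0%R c).
Proof.
case: c => [//|c0 c] _; rewrite ballot_code_of_composition /= => c_ge0.
by rewrite c_ge0 path_code_of_composition //; lia.
Qed.

(* the last part [x_m + a] makes the parts of a code of length m sum to b * m + 1 *)
Fixpoint composition_of_code (s : seq int) : seq nat :=
  match s with
  | [::] => [::]
  | [:: x] => [:: absz (x + a%:Z)%R]
  | x :: ((y :: _) as t) => absz (x + b%:Z - y)%R :: composition_of_code t
  end.

Lemma size_composition_of_code s : size (composition_of_code s) = size s.
Proof. by elim: s => [//|x [//|y t] IHs] /=; rewrite IHs. Qed.

Lemma composition_of_codeK (x : int) (t : seq int) : path step x t ->
  code_of_composition x (composition_of_code (x :: t)) = x :: t.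
Proof.
elim: t x => [//|y t IHt] x /= /andP[yx ty]; congr (_ :: _).
have -> : (x + b%:Z - (absz (x + b%:Z - y)%R)%:Z = y)%R by lia.
exact: IHt.
Qed.

Lemma sumn_composition_of_code (x : int) (t : seq int) :
  (0 <= x)%R -> all (fun y => 0 <= y)%R t -> path step x t ->
  sumn (composition_of_code (x :: t)) = `|x|%N + b * (size t).+1 + 1.
Proof.
elim: t x => [|y t IHt] x x_ge0 /=; first by lia.
move=> /andP[y_ge0 t_ge0] /andP[yx ty].
rewrite (IHt y) // mulnS; lia.
Qed.

Lemma code_of_composition_inj (x : int) c c' : size c = size c' -> sumn c = sumn c' ->
  code_of_composition x c = code_of_composition x c' -> c = c'.
Proof.
elim: c x c' => [|c0 c IHc] x [|c0' c'] //= [size_cc'] sum_cc' [e].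
have [c_nil|c_neq0] := eqVneq c [::].
  by move: size_cc' sum_cc'; rewrite c_nil => /esym/size0nil->; rewrite !addn0 => ->.
have c0c0' : c0 = c0'.
  move: c_neq0 size_cc' e; case: c {IHc sum_cc'} => [//|d c]; case: c' => [//|d' c'] _ _ /=.
  by case; lia.
by subst c0'; congr (_ :: _); apply: IHc e => //; lia.
Qed.

Definition codes (m : nat) : seq (seq int) :=
  map (code_of_composition 0%R) (filter (ballot b) (weak_compositions m (b * m + 1))).

Lemma mem_codes m s : 0 < m -> (s \in codes m) = pyramid_code a s && (size s == m).
Proof.
move=> m_gt0; apply/mapP/andP => [[c] | ].
  rewrite mem_filter mem_weak_compositions => /andP[cb /andP[/eqP sc _]] ->.
  rewrite size_code_of_composition sc; split=> //.
  by apply: pyramid_code_of_composition cb; rewrite -size_eq0 sc -lt0n.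
case: s => [[//]|x t] [/and3P[/eqP-> t_ge0 t_step] /eqP <-].
exists (composition_of_code (0%R :: t)); last by rewrite composition_of_codeK.
rewrite mem_filter mem_weak_compositions size_composition_of_code eqxx andTb.
apply/andP; split; last by rewrite sumn_composition_of_code.
by rewrite ballot_code_of_composition composition_of_codeK //= t_ge0.
Qed.

Lemma codes_uniq m : uniq (codes m).
Proof.
rewrite map_inj_in_uniq ?filter_uniq ?weak_compositions_uniq // => c c'.
rewrite !mem_filter !mem_weak_compositions.
move=> /and3P[_ /eqP sc /eqP sumc] /and3P[_ /eqP sc' /eqP sumc'].
by apply: code_of_composition_inj; rewrite ?sc ?sc' ?sumc ?sumc'.
Qed.

Lemma size_codes m : 0 < m -> m * size (codes m) = 'C(a * m, b * m + 1).
Proof.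
move=> m_gt0; rewrite size_map size_filter cycle_lemma // size_weak_compositions.
by congr 'C(_, _); lia.
Qed.

End Codes.

Section FussCatalan.
Variables (b m k : nat).
Hypotheses (m_gt0 : 0 < m) (mk : m * k = 'C(b.+1 * m, b * m + 1)).

Lemma fuss_catalan_factorials : k * (m`! * (b * m + 1)`!) = (b.+1 * m)`!.
Proof.
have le_bm : b * m + 1 <= b.+1 * m by rewrite mulSn; lia.
have := bin_fact le_bm; rewrite -mk.
have -> : b.+1 * m - (b * m + 1) = m.-1 by rewrite mulSn; lia.
have fact_m : m`! = m * m.-1`! by rewrite -{1}(prednK m_gt0) factS prednK.
by rewrite fact_m => <-; ring.
Qed.

Lemma fuss_catalan_binomial : k * (b * m + 1) = 'C(b.+1 * m, m).
Proof.
have le_m : m <= b.+1 * m by rewrite mulSn leq_addr.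
have nm : b.+1 * m - m = b * m by rewrite mulSn addKn.
have := bin_fact le_m; rewrite nm -fuss_catalan_factorials addn1 factS => e.
apply/eqP; rewrite -(eqn_pmul2r (_ : 0 < m`! * (b * m)`!)) ?muln_gt0 ?fact_gt0 //.
by rewrite e; apply/eqP; ring.
Qed.

End FussCatalan.

Local Open Scope fset_scope.

Theorem corollary1 (a m : nat) (ha : (3 <= a)%N) (hm : (1 <= m)%N) :
  exists L : seq {fset placed},
    [/\ uniq L,
        (forall C : {fset placed}, C \in L <-> (right0_pyramid a C /\ #|` C| = m)),
        size L = ('C(a * m, m) %/ ((a - 1) * m + 1))%N
      & size L = ((a * m)`! %/ (m`! * ((a - 1) * m + 1)`!))%N].
Proof.
case: a ha => // b _; rewrite subn1 /=.
have a_gt0 : 0 < b.+1 by [].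
have card_code s : pyramid_code b.+1 s -> #|` heap_of b.+1 s| = size s.
  by move=> /(pyramid_code_spec a_gt0)/card_heap_of.
exists (map (heap_of b.+1) (codes b m)); rewrite size_map; split.
- rewrite map_inj_in_uniq ?codes_uniq // => s s'.
  by rewrite !mem_codes // => /andP[c _] /andP[c' _]; apply: heap_of_inj.
- move=> C; split.
    case/mapP=> s; rewrite mem_codes // => /andP[c /eqP sm] ->.
    by split; [apply: right0_pyramid_heap_of | rewrite card_code ?sm].
  case=> /right0_pyramid_stacked/(heap_of_surj a_gt0) [s c <-] Cm.
  by apply: map_f; rewrite mem_codes // c -Cm card_code /=.
- by rewrite -(fuss_catalan_binomial hm (size_codes b hm)) mulnK ?addn1.
- by rewrite -(fuss_catalan_factorials hm (size_codes b hm)) mulnK // muln_gt0 !fact_gt0.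
Qed.
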